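(* Let $p,q\ge0$ with $p+q<1$, let $\varepsilon>0$, let $h$ denote the binary entropy in nats, $h(x)=-x\log x-(1-x)\log(1-x)$, and put $\phi=\phi(p,q)=\frac{h(p)-h(q)}{1-p-q}$. Define \[ m_{\mathrm{COUNT}}=\frac{1}{D_{\mathrm{KL}}\big(q\,\|\,1/(1+e^{\phi})\big)}\;k\log(n/k). \] If $m\le(1-\varepsilon)m_{\mathrm{COUNT}}$, then no algorithm can recover $\sigma$ with high probability, for any (non-adaptive) test design with $m$ tests.
   Context: Noisy group testing model: $n$ individuals, $k\sim n^{\theta}$ infected for a fixed $\theta\in(0,1)$; the infection vector $\sigma\in\{0,1\}^n$ is uniformly random among vectors of Hamming weight $k$. Each of the $m$ tests is a pool of individuals; it is truly positive if the pool contains at least one infected individual and truly negative otherwise. The observed result of each test is obtained independently: a truly negative test is displayed positive with probability $p$, a truly positive test is displayed negative with probability $q$. The algorithm sees the test design and the displayed results. $\log$ is natural; $D_{\mathrm{KL}}(r\|s)=r\log(r/s)+(1-r)\log\frac{1-r}{1-s}$. ''With high probability'' means with probability tending to $1$ as $n\to\infty$. *)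

From HB Require Import structures.
From mathcomp Require Import all_boot all_order all_algebra.
From mathcomp Require Import all_classical all_reals all_analysis.
Set Implicit Arguments. Unset Strict Implicit. Unset Printing Implicit Defensive.
Import Order.TTheory GRing.Theory Num.Theory.
Local Open Scope ring_scope.

Section GT.
Variable R : realType.

(* binary entropy in nats; ln 0 = 0 in mathcomp-analysis, so 0 log 0 = 0 *)
Definition bin_entropy (x : R) : R := - (x * ln x) - (1 - x) * ln (1 - x).

Definition DKL (r s : R) : R :=
  r * ln (r / s) + (1 - r) * ln ((1 - r) / (1 - s)).

Definition phi (p q : R) : R := (bin_entropy p - bin_entropy q) / (1 - p - q).

Definition m_count (p q : R) (n k : nat) : R :=
  (k%:R * ln (n%:R / k%:R)) / DKL q (1 / (1 + expR (phi p q))).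

Definition weight_vectors (n k : nat) : {set {ffun 'I_n -> bool}} :=
  [set s : {ffun 'I_n -> bool} | #|[set i | s i]| == k].

Definition true_result n m (G : 'I_m -> {set 'I_n}) (s : {ffun 'I_n -> bool})
  (a : 'I_m) : bool := [exists i in G a, s i].

(* probability of observing displayed results y given s: independent noisy
   channel, negative -> positive w.p. p, positive -> negative w.p. q *)
Definition channel_prob (p q : R) n m (G : 'I_m -> {set 'I_n})
  (s : {ffun 'I_n -> bool}) (y : {ffun 'I_m -> bool}) : R :=
  \prod_(a : 'I_m)
    (if true_result G s a then (if y a then 1 - q else q)
     else (if y a then p else 1 - p)).

(* success probability of a (possibly randomized) algorithm A, where
   A y s' is the probability that A outputs s' on displayed results y,
   sigma uniform among weight-k vectors *)
Definition success_prob (p q : R) n m (G : 'I_m -> {set 'I_n})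
  (A : {ffun 'I_m -> bool} -> {ffun 'I_n -> bool} -> R) (k : nat) : R :=
  (#|weight_vectors n k|%:R)^-1 *
  \sum_(s in weight_vectors n k) \sum_(y : {ffun 'I_m -> bool})
     channel_prob p q G s y * A y s.

End GT.

(* Let Q be the product law on displayed results under which every test is
   positive with probability 1 - 1/(1+e^phi); phi is chosen so that, for both
   true results x, the per-test log-likelihood ratio l(x, y) = log (W(y|x) / Q(y))
   of the noisy channel W has mean C = D_KL(q || 1/(1+e^phi)).  Split the pairs
   (sigma, y) according to whether P_sigma(y) <= e^L Q(y).  On the first part
   the success is at most e^L times the success against Q, which is at most
   1/binom(n, k) because y then carries no information on sigma; on the second
   part sum_a l > L, an event of probability at most e^(-tL + m (tC + O(t^2)))
   by a Chernoff bound.  With L = log binom(n, k) - (eps/4) k log(n/k) and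
   m C <= (1 - eps) k log(n/k), both terms are exp(-Omega(k log(n/k))), which
   vanishes since k ~ n^theta with theta < 1. *)

From HB Require Import structures.
From mathcomp Require Import all_boot all_order all_algebra.
From mathcomp Require Import all_classical all_reals all_analysis.
From mathcomp Require Import ring lra zify.
Set Implicit Arguments. Unset Strict Implicit. Unset Printing Implicit Defensive.
Import numFieldNormedType.Exports.
Import Order.TTheory GRing.Theory Num.Theory.
Local Open Scope classical_set_scope.
Local Open Scope ring_scope.

Section RealFacts.
Variable R : realType.
Implicit Types a b u c : R.

Lemma mul_ln_div a b : 0 <= a -> 0 < b -> a * ln (a / b) = a * ln a - a * ln b.
Proof.
rewrite le_eqVlt => /predU1P[<- | a0] b0; first by rewrite !mul0r subr0.
by rewrite ln_div ?posrE // mulrBr.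
Qed.

Lemma subr_le_mul_ln_div a b : 0 <= a -> 0 < b -> a - b <= a * ln (a / b).
Proof.
rewrite le_eqVlt => /predU1P[<- | a0] b0; first by rewrite mul0r sub0r oppr_le0 ltW.
have ba0 : 0 < b / a by rewrite divr_gt0.
have ln_ba : ln (b / a) <= b / a - 1.
  by rewrite -[X in ln X](subrKC 1) le_ln1Dx // ltrBrDl subrr.
rewrite -invf_div lnV ?posrE // mulrN lerNr opprB.
apply: le_trans (ler_wpM2l (ltW a0) ln_ba) _.
by rewrite mulrBr mulr1 mulrCA divff ?mulr1 ?lt0r_neq0.
Qed.

Lemma expR_le_quadratic u : u <= 1/2 -> expR u <= 1 + u + 2 * u ^+ 2.
Proof.
move=> u12; have u1 : 0 < 1 - u by lra.
rewrite -[u]opprK expRN opprK.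
have : (expR (- u))^-1 <= (1 - u)^-1.
  by rewrite lef_pV2 ?posrE ?expR_gt0 // expR_ge1Dx.
move/le_trans; apply.
rewrite -(ler_pM2l u1) mulfV ?gt_eqF // -subr_ge0 (_ : _ - _ = u ^+ 2 * (1 - 2 * u)); last by ring.
by rewrite mulr_ge0 ?sqr_ge0 //; lra.
Qed.

Lemma expRN_le_quarter c b : 0 < c -> 3 / c <= b -> expR (- (c * b)) <= 1/4.
Proof.
move=> c0; rewrite ler_pdivrMr // mulrC => cb.
rewrite expRN -[1/4]invf_div lef_pV2 ?posrE ?expR_gt0 //.
by apply: le_trans (expR_ge1Dx (c * b)); lra.
Qed.

Lemma ln_prod (I : Type) (r : seq I) (F : I -> R) :
  (forall i, 0 < F i) -> ln (\prod_(i <- r) F i) = \sum_(i <- r) ln (F i).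
Proof.
move=> F0; elim: r => [|i r IHr]; first by rewrite !big_nil ln1.
by rewrite !big_cons lnM ?IHr // posrE // prodr_gt0.
Qed.

Lemma natR_powR_unbounded c b : 0 < c -> \forall n \near \oo, b <= n%:R `^ c.
Proof.
move=> c0; near=> n.
have b_le : Num.max b 0 `^ c^-1 <= n%:R by near: n; exact: nbhs_infty_ger.
have m0 : 0 <= Num.max b 0 by rewrite le_max lexx orbT.
apply: le_trans (_ : b <= Num.max b 0) _; first by rewrite le_max lexx.
have -> : Num.max b 0 = (Num.max b 0 `^ c^-1) `^ c.
  by rewrite -powRrM mulVf ?powRr1 ?lt0r_neq0.
by apply: ge0_ler_powR; rewrite ?nnegrE ?powR_ge0 ?(ltW c0).
Unshelve. all: by end_near.
Qed.

Lemma change_of_measure_le (P Q a L t : R) :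
  0 <= P -> 0 < Q -> 0 <= a <= 1 -> 0 <= t ->
  P * a <= expR L * Q * a + expR (- (t * L)) * (P * expR (t * ln (P / Q))).
Proof.
move=> P0 Q0 /andP[a0 a1] t0.
have [PLQ | LQP] := lerP P (expR L * Q).
  apply: le_trans (ler_wpM2r a0 PLQ) _.
  by rewrite lerDl !mulr_ge0 ?expR_ge0.
have PQ0 : 0 < P / Q by rewrite divr_gt0 // (lt_trans _ LQP) ?mulr_gt0 ?expR_gt0.
have L_lt : L < ln (P / Q) by rewrite -ltr_expR lnK ?posrE // ltr_pdivlMr.
apply: ler_wpDl; first by rewrite !mulr_ge0 ?expR_ge0 ?(ltW Q0).
rewrite mulrCA -expRD ler_wpM2l //; apply: le_trans a1 _.
apply: le_trans (expR_ge1Dx _); rewrite lerDl -mulrN -mulrDr mulr_ge0 //.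
by rewrite addrC subr_ge0 ltW.
Qed.

Lemma chernoff_exponent_le (C M e t m b : R) : 0 < C -> 0 <= e <= 1 -> 0 <= t ->
  0 <= m -> 0 <= b -> 2 * t * M ^+ 2 <= e * C / 4 -> m * C <= (1 - e) * b ->
  m * (t * C + 2 * (t * M) ^+ 2) <= (1 - 3 * e / 4) * t * b.
Proof.
move=> C0 /andP[e0 e1] t0 m0 b0 tM mC.
have mtM : m * (2 * t * M ^+ 2) <= m * (e * C / 4) by rewrite ler_wpM2l.
have emC : e * (m * C) <= e * ((1 - e) * b) by rewrite ler_wpM2l.
have eeb : 0 <= e * e * b by rewrite !mulr_ge0.
rewrite exprMn mulrA [X in X <= _](_ : _ = t * (m * C + m * (2 * t * M ^+ 2))); last by ring.
rewrite [X in _ <= X](_ : _ = t * ((1 - 3 * e / 4) * b)); last by ring.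
rewrite ler_wpM2l //; lra.
Qed.

End RealFacts.

Lemma expn_mul_fact_le_ffact n k : (k <= n)%N -> (n ^ k * k`! <= n ^_ k * k ^ k)%N.
Proof.
move=> kn; have pow_prod c : (c ^ k = \prod_(i < k) c)%N.
  by rewrite prod_nat_const card_ord.
rewrite -{1}ffactnn !ffact_prod !pow_prod -!big_split /=; apply: leq_prod => i _.
have := ltn_ord i; nia.
Qed.

Lemma binomial_ge_pow (R : realFieldType) n k : (0 < k <= n)%N ->
  (n%:R / k%:R) ^+ k <= 'C(n, k)%:R :> R.
Proof.
case/andP=> k0 kn; have kR : 0 < k%:R :> R by rewrite ltr0n.
have fR : 0 < (k`!)%:R :> R by rewrite ltr0n fact_gt0.
rewrite expr_div_n ler_pdivrMr ?exprn_gt0 // -(ler_pM2r fR).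
rewrite -!natrX -!natrM ler_nat mulnAC bin_ffact.
exact: expn_mul_fact_le_ffact.
Qed.

Lemma card_weight_vectors n k : #|weight_vectors n k| = 'C(n, k).
Proof.
pose f (B : {set 'I_n}) : {ffun 'I_n -> bool} := [ffun i => i \in B].
have f_inj : injective f.
  by move=> B1 B2 /ffunP f12; apply/setP => i; have := f12 i; rewrite !ffunE.
suff -> : weight_vectors n k = f @: [set B : {set 'I_n} | #|B| == k]%SET.
  by rewrite card_imset // card_draws card_ord.
apply/setP => s; rewrite inE; apply/idP/imsetP => [sk | [B Bk ->]].
  by exists [set i | s i]%SET; rewrite ?inE //; apply/ffunP => i; rewrite ffunE inE.
by move: Bk; rewrite inE => /eqP <-; apply/eqP/eq_card => i; rewrite !inE ffunE.
Qed.

(* No hypothesis on [k]: for [k > n] both sides are nonpositive since [ln 0 = 0]. *)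
Lemma mul_ln_le_ln_card_weight_vectors (R : realType) n k :
  k%:R * ln (n%:R / k%:R) <= ln #|weight_vectors n k|%:R :> R.
Proof.
rewrite card_weight_vectors.
have [-> | k0] := posnP k; first by rewrite mul0r bin0 ln1.
have [kn | nk] := leqP k n; last first.
  rewrite bin_small // (ln0 (lexx 0)); apply: mulr_ge0_le0; rewrite ?ler0n // ln_le0 //.
  by rewrite ler_pdivrMr ?ltr0n // mul1r ler_nat ltnW.
have nk0 : 0 < n%:R / k%:R :> R by rewrite divr_gt0 // ltr0n // (leq_trans k0).
rewrite mulr_natl -lnXn // ler_ln ?posrE ?exprn_gt0 ?ltr0n ?bin_gt0 //.
by rewrite binomial_ge_pow ?k0.
Qed.

Section Channel.
Variables (R : realType) (p q : R).
Hypotheses (p_ge0 : 0 <= p) (q_ge0 : 0 <= q) (pq_lt1 : p + q < 1).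

Definition chan (x y : bool) : R :=
  if x then (if y then 1 - q else q) else (if y then p else 1 - p).

(* The output law [ref] is the capacity-achieving one: [phi] is exactly what
   makes both inputs have divergence [cap] from it ([llr_mean]). *)
Definition neg_ref : R := 1 / (1 + expR (phi p q)).

Definition ref (y : bool) : R := if y then 1 - neg_ref else neg_ref.

Definition llr (x y : bool) : R := ln (chan x y / ref y).

Definition cap : R := DKL q neg_ref.

Lemma neg_ref_gt0 : 0 < neg_ref.
Proof. by rewrite /neg_ref div1r invr_gt0 addr_gt0 ?expR_gt0. Qed.

Lemma neg_ref_lt1 : neg_ref < 1.
Proof. by rewrite /neg_ref div1r invf_lt1 ?addr_gt0 ?expR_gt0 // ltrDl expR_gt0. Qed.

Lemma ln_1Bneg_ref : ln (1 - neg_ref) = ln neg_ref + phi p q.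
Proof.
have e0 : 1 + expR (phi p q) != 0 by rewrite lt0r_neq0 ?addr_gt0 ?expR_gt0.
have -> : 1 - neg_ref = neg_ref * expR (phi p q) by rewrite /neg_ref; field.
by rewrite lnM ?posrE ?expR_gt0 ?neg_ref_gt0 // expRK.
Qed.

Lemma chan_ge0 x y : 0 <= chan x y.
Proof.
by have := p_ge0; have := q_ge0; have := pq_lt1; case: x; case: y => /=; lra.
Qed.

Lemma chan_sum x : chan x true + chan x false = 1.
Proof. by case: x => /=; ring. Qed.

Lemma ref_gt0 y : 0 < ref y.
Proof. by have := neg_ref_gt0; have := neg_ref_lt1; case: y => /=; lra. Qed.

Lemma ref_sum : ref true + ref false = 1.
Proof. by rewrite /= subrK. Qed.

Lemma llr_mean x : chan x true * llr x true + chan x false * llr x false = cap.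
Proof.
rewrite /llr /cap /DKL /=; case: x => /=; first by rewrite addrC.
have ref1 : 0 < 1 - neg_ref by have := neg_ref_lt1; lra.
have p1 : 0 < 1 - p - q by have := pq_lt1; lra.
have [p0 q0] := (p_ge0, q_ge0).
rewrite !mul_ln_div ?neg_ref_gt0 //; try lra.
have : phi p q * (1 - p - q) = bin_entropy p - bin_entropy q.
  by rewrite /phi divfK // lt0r_neq0.
rewrite ln_1Bneg_ref /bin_entropy; lra.
Qed.

Lemma cap_ge0 : 0 <= cap.
Proof.
have ref1 : 0 < 1 - neg_ref by have := neg_ref_lt1; lra.
have := subr_le_mul_ln_div q_ge0 neg_ref_gt0.
have q1 : 0 <= 1 - q by have := pq_lt1; have := p_ge0; lra.
have := subr_le_mul_ln_div q1 ref1.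
rewrite /cap /DKL; lra.
Qed.

Definition llr_bound : R :=
  1 + `|llr false false| + `|llr false true| + `|llr true false| + `|llr true true|.

Lemma llr_bound_ge1 : 1 <= llr_bound.
Proof.
have := normr_ge0 (llr false false); have := normr_ge0 (llr false true).
have := normr_ge0 (llr true false); have := normr_ge0 (llr true true).
rewrite /llr_bound; lra.
Qed.

Lemma abs_llr_le x y : `|llr x y| <= llr_bound.
Proof.
have := normr_ge0 (llr false false); have := normr_ge0 (llr false true).
have := normr_ge0 (llr true false); have := normr_ge0 (llr true true).
by rewrite /llr_bound; case: x; case: y; lra.
Qed.

Definition llr_mgf (t : R) (x : bool) : R := \sum_(y : bool) chan x y * expR (t * llr x y).

Lemma llr_mgf_le t x : 0 <= t -> t * llr_bound <= 1/2 ->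
  llr_mgf t x <= expR (t * cap + 2 * (t * llr_bound) ^+ 2).
Proof.
move=> t0 tM; set z := 2 * (t * llr_bound) ^+ 2.
have term_le y : chan x y * expR (t * llr x y) <= chan x y * (1 + t * llr x y + z).
  apply: ler_wpM2l; first exact: chan_ge0.
  have tl : `|t * llr x y| <= t * llr_bound.
    by rewrite normrM ger0_norm // ler_wpM2l // abs_llr_le.
  apply: le_trans (expR_le_quadratic _) _; first exact: le_trans (ler_norm _) (le_trans tl tM).
  rewrite lerD2l ler_pM2l // -real_normK ?num_real // lerXn2r ?nnegrE //.
  by rewrite (le_trans _ tl).
apply: le_trans (expR_ge1Dx _).
rewrite /llr_mgf big_bool /=; apply: le_trans (lerD (term_le true) (term_le false)) _.
have chan_false : chan x false = 1 - chan x true by rewrite -(chan_sum x) addrAC subrr add0r.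
rewrite [leLHS](_ : _ = 1 + (t * cap + z)) //.
by rewrite -(llr_mean x) chan_false; ring.
Qed.

Lemma prod_chan_expR_llr m (x y : 'I_m -> bool) t :
  \prod_i (chan (x i) (y i) * expR (t * llr (x i) (y i))) =
  (\prod_i chan (x i) (y i)) *
    expR (t * ln ((\prod_i chan (x i) (y i)) / \prod_i ref (y i))).
Proof.
have [/existsP[i /eqP chan0] | /existsPn chan_neq0] :=
  boolP [exists i, chan (x i) (y i) == 0].
  have -> : \prod_i chan (x i) (y i) = 0 by rewrite (bigD1 i) //= chan0 mul0r.
  by rewrite (bigD1 i) //= chan0 !mul0r.
have chan_gt0 i : 0 < chan (x i) (y i) by rewrite lt0r chan_neq0 chan_ge0.
have ref_prod_gt0 : 0 < \prod_i ref (y i) by apply: prodr_gt0 => i _; exact: ref_gt0.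
have chan_prod_gt0 : 0 < \prod_i chan (x i) (y i) by apply: prodr_gt0.
rewrite big_split /= -expR_sum -mulr_sumr ln_div ?posrE //.
rewrite !ln_prod //; last by move=> i; exact: ref_gt0.
congr (_ * expR (t * _)); rewrite -sumrB; apply: eq_bigr => i _.
by rewrite /llr ln_div ?posrE ?ref_gt0.
Qed.

Lemma sum_prod_ref m : \sum_(y : {ffun 'I_m -> bool}) \prod_i ref (y i) = 1.
Proof.
rewrite -(bigA_distr_bigA (fun (_ : 'I_m) b => ref b)) /=.
by apply: big1 => i _; rewrite big_bool /= ref_sum.
Qed.

Lemma sum_prod_chan_expR_llr_le m (x : 'I_m -> bool) t :
  0 <= t -> t * llr_bound <= 1/2 ->
  \sum_(y : {ffun 'I_m -> bool}) \prod_i (chan (x i) (y i) * expR (t * llr (x i) (y i)))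
    <= expR (m%:R * (t * cap + 2 * (t * llr_bound) ^+ 2)).
Proof.
move=> t0 tM.
rewrite -(bigA_distr_bigA (fun i b => chan (x i) b * expR (t * llr (x i) b))) /=.
rewrite expRM_natl -[m in leRHS](card_ord m) -prodr_const.
apply: ler_prod => i _; rewrite sumr_ge0 ?llr_mgf_le // => b _.
by rewrite mulr_ge0 ?chan_ge0 ?expR_ge0.
Qed.

Lemma success_prob_le_chernoff n m (G : 'I_m -> {set 'I_n})
    (A : {ffun 'I_m -> bool} -> {ffun 'I_n -> bool} -> R) k (L t : R) :
  (forall y s, 0 <= A y s) -> (forall y, \sum_s A y s = 1) ->
  0 < t -> t * llr_bound <= 1/2 -> (0 < #|weight_vectors n k|)%N ->
  success_prob p q G A k <= expR L / #|weight_vectors n k|%:R +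
    expR (- (t * L)) * expR (m%:R * (t * cap + 2 * (t * llr_bound) ^+ 2)).
Proof.
move=> A_ge0 A_sum1 t0 tM card_gt0.
set N := #|weight_vectors n k|; set E := expR (m%:R * _).
pose tilted s y := \prod_i (chan (true_result G s i) (y i) *
                            expR (t * llr (true_result G s i) (y i))).
have A_le1 y s : A y s <= 1.
  by rewrite -(A_sum1 y) (bigD1 s) //= lerDl sumr_ge0.
have pointwise s y : channel_prob p q G s y * A y s <=
    expR L * (\prod_i ref (y i) * A y s) + expR (- (t * L)) * tilted s y.
  rewrite /tilted prod_chan_expR_llr mulrA.
  apply: change_of_measure_le; last exact: ltW.
  - by apply: prodr_ge0 => i _; exact: chan_ge0.
  - by apply: prodr_gt0 => i _; exact: ref_gt0.
  - by rewrite A_ge0 A_le1.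
have ref_part : \sum_(s in weight_vectors n k) \sum_(y : {ffun 'I_m -> bool})
    expR L * (\prod_i ref (y i) * A y s) <= expR L.
  rewrite exchange_big /=.
  apply: le_trans (_ : _ <= \sum_(y : {ffun 'I_m -> bool}) expR L * \prod_i ref (y i)) _.
    apply: ler_sum => y _; rewrite -mulr_sumr ler_wpM2l ?expR_ge0 // -mulr_sumr.
    apply: ler_piMr; first by apply: prodr_ge0 => i _; exact: ltW (ref_gt0 _).
    rewrite -(A_sum1 y) [leRHS](bigID (mem (weight_vectors n k))) /= lerDl.
    by rewrite sumr_ge0.
  by rewrite -mulr_sumr sum_prod_ref mulr1.
have tilted_part : \sum_(s in weight_vectors n k) \sum_(y : {ffun 'I_m -> bool})
    expR (- (t * L)) * tilted s y <= N%:R * (expR (- (t * L)) * E).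
  rewrite mulr_natl /N -sumr_const.
  apply: ler_sum => s _; rewrite -mulr_sumr ler_wpM2l ?expR_ge0 //.
  exact: sum_prod_chan_expR_llr_le (ltW t0) tM.
have N_gt0 : 0 < N%:R :> R by rewrite ltr0n.
rewrite /success_prob -/N mulrC ler_pdivrMr // mulrDl mulfVK ?gt_eqF // mulrC.
apply: le_trans (ler_sum _ (fun s _ => ler_sum _ (fun y _ => pointwise s y))) _.
under eq_bigr do rewrite big_split /=.
by rewrite big_split /= lerD.
Qed.

Lemma chernoff_parameter e : 0 < e <= 1 ->
  exists2 t, 0 < t & t * llr_bound <= 1/2 /\
    forall m B, 0 <= B -> m%:R <= (1 - e) * (B / cap) ->
      m%:R * (t * cap + 2 * (t * llr_bound) ^+ 2) <= (1 - 3 * e / 4) * t * B.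
Proof.
case/andP=> e0 e1; have M1 := llr_bound_ge1; have M0 : 0 < llr_bound by lra.
(* When [cap = 0], the junk value [B / 0 = 0] forces [m = 0]. *)
have [cap0 | cap_neq0] := eqVneq cap 0.
  have t0 : 0 < 1 / (2 * llr_bound) by rewrite divr_gt0 ?mulr_gt0.
  exists (1 / (2 * llr_bound)) => //; split.
    by rewrite mulrAC ler_pdivrMr ?mulr_gt0 //; lra.
  move=> m B B0; rewrite cap0 invr0 !mulr0 => m0.
  have -> : m = 0%N by apply/eqP; rewrite -leqn0 -(ler_nat R).
  by rewrite mul0r !mulr_ge0 ?(ltW t0) //; lra.
have cap_gt0 : 0 < cap by rewrite lt0r cap_neq0 cap_ge0.
pose t := Num.min (1 / (2 * llr_bound)) (e * cap / (8 * llr_bound ^+ 2)).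
have M20 : 0 < llr_bound ^+ 2 by rewrite exprn_gt0.
have t_gt0 : 0 < t by rewrite lt_min !divr_gt0 ?mulr_gt0.
exists t => //; split.
  rewrite -ler_pdivlMr // (le_trans (_ : t <= 1 / (2 * llr_bound))) ?ge_min ?lexx //.
  by rewrite invfM mulrA.
move=> m B B0 mB.
apply: (chernoff_exponent_le cap_gt0 _ (ltW t_gt0) (ler0n _ m) B0).
- by rewrite (ltW e0) e1.
- have t_le : t <= e * cap / (8 * llr_bound ^+ 2) by rewrite ge_min lexx orbT.
  have -> : e * cap / 4 = 2 * (e * cap / (8 * llr_bound ^+ 2)) * llr_bound ^+ 2.
    by field; rewrite gt_eqF.
  by rewrite ler_pM2r // ler_pM2l.
- by rewrite -ler_pdivlMr // -mulrA.
Qed.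

Lemma success_prob_le_expR n m (G : 'I_m -> {set 'I_n})
    (A : {ffun 'I_m -> bool} -> {ffun 'I_n -> bool} -> R) k (e t B : R) :
  (forall y s, 0 <= A y s) -> (forall y, \sum_s A y s = 1) ->
  0 < t -> t * llr_bound <= 1/2 -> B <= ln #|weight_vectors n k|%:R ->
  m%:R * (t * cap + 2 * (t * llr_bound) ^+ 2) <= (1 - 3 * e / 4) * t * B ->
  success_prob p q G A k <= expR (- (e / 4 * B)) + expR (- (t * e / 2 * B)).
Proof.
move=> A_ge0 A_sum1 t0 tM B_le mgf_le.
have [card0 | card_gt0] := posnP #|weight_vectors n k|.
  by rewrite /success_prob card0 invr0 mul0r addr_ge0 ?expR_ge0.
pose L := ln #|weight_vectors n k|%:R - e / 4 * B.
apply: le_trans (success_prob_le_chernoff G L A_ge0 A_sum1 t0 tM card_gt0) _.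
apply: lerD.
  by rewrite /L expRD lnK ?posrE ?ltr0n // mulrC mulKf ?gt_eqF ?ltr0n.
rewrite -expRD ler_expR /L.
have : t * B <= t * ln #|weight_vectors n k|%:R by rewrite ler_pM2l.
lra.
Qed.

End Channel.

Lemma mul_ln_div_unbounded (R : realType) (theta : R) (k : nat -> nat) :
  0 < theta -> theta < 1 ->
  ((fun n : nat => ((k n)%:R / (n%:R `^ theta) : R)) @ \oo --> (1 : R)) ->
  forall b : R, \forall n \near \oo, b <= (k n)%:R * ln (n%:R / (k n)%:R).
Proof.
move=> th0 th1 hk b; have ln2_gt0 : 0 < ln (2 : R) by rewrite ln_gt0 // ltr1n.
near=> n.
have n_gt0 : 0 < n%:R :> R by rewrite ltr0n; near: n; exact: nbhs_infty_gt.
have x_ge : 2 * (b / ln 2) <= n%:R `^ theta.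
  by near: n; exact: natR_powR_unbounded.
have y_ge : 4 <= n%:R `^ (1 - theta).
  by near: n; apply: natR_powR_unbounded; lra.
have k_lo : 1/2 < (k n)%:R / n%:R `^ theta by near: n; apply: (cvgr_gt 1 hk); lra.
have k_hi : (k n)%:R / n%:R `^ theta < 3/2 by near: n; apply: (cvgr_lt 1 hk); lra.
have n_split : n%:R = n%:R `^ theta * n%:R `^ (1 - theta).
  by rewrite -powRD ?subrKC ?powRr1 ?oner_eq0 ?ler0n.
move: x_ge y_ge k_lo k_hi n_split; set x := n%:R `^ theta; set y := n%:R `^ (1 - theta).
set kn := (k n)%:R => x_ge y_ge k_lo k_hi n_split.
have x_gt0 : 0 < x by rewrite powR_gt0.
rewrite ltr_pdivlMr // in k_lo; rewrite ltr_pdivrMr // in k_hi.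
have kn_gt0 : 0 < kn by nra.
apply: le_trans (_ : b <= kn * ln 2) _.
  by rewrite -ler_pdivrMr //; nra.
rewrite ler_pM2l // ler_ln ?posrE ?divr_gt0 // ler_pdivlMr //.
by rewrite n_split; nra.
Unshelve. all: by end_near.
Qed.

Theorem theorem2p3 (R : realType) (theta p q eps : R) (k m : nat -> nat)
  (G : forall n : nat, 'I_(m n) -> {set 'I_n})
  (A : forall n : nat, {ffun 'I_(m n) -> bool} -> {ffun 'I_n -> bool} -> R) :
  0 < theta -> theta < 1 ->
  0 <= p -> 0 <= q -> p + q < 1 -> 0 < eps ->
  ((fun n : nat => ((k n)%:R / (n%:R `^ theta) : R)) @ \oo --> (1 : R)) ->
  (exists N : nat, forall n : nat, (N <= n)%N ->
      (m n)%:R <= (1 - eps) * m_count p q n (k n)) ->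
  (forall n y s, 0 <= A n y s) ->
  (forall n y, \sum_(s : {ffun 'I_n -> bool}) A n y s = 1) ->
  ~ ((fun n : nat => (success_prob p q (G n) (A n) (k n) : R)) @ \oo --> (1 : R)).
Proof.
move=> th0 th1 p0 q0 pq eps0 hk [N m_le] A_ge0 A_sum1 success_to1.
pose e := Num.min eps 1.
have e01 : 0 < e <= 1 by rewrite lt_min eps0 ltr01 ge_min lexx orbT.
have [t t_gt0 [tM mgf_le]] := chernoff_parameter p0 q0 pq e01.
have c1 : 0 < e / 4 by rewrite divr_gt0 // (andP e01).1.
have c2 : 0 < t * e / 2 by rewrite !divr_gt0 ?mulr_gt0 // (andP e01).1.
pose b := Num.max (3 / (e / 4)) (3 / (t * e / 2)).
have b1 : 3 / (e / 4) <= b by rewrite le_max lexx.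
have b2 : 3 / (t * e / 2) <= b by rewrite le_max lexx orbT.
suff : 1 <= 1/2 :> R by lra.
rewrite -[leLHS](cvg_lim _ success_to1) //; apply: limr_le; first exact: cvgP success_to1.
near=> n.
have b_le : b <= (k n)%:R * ln (n%:R / (k n)%:R).
  by near: n; exact: (mul_ln_div_unbounded th0 th1 hk).
have mn_le : (m n)%:R <= (1 - eps) * m_count p q n (k n) by near: n; exists N.
set B := (k n)%:R * ln _ in b_le mn_le.
have B_ge0 : 0 <= B by rewrite (le_trans _ (le_trans b1 b_le)) // divr_ge0 // ltW.
have mB : (m n)%:R <= (1 - e) * (B / cap p q).
  apply: le_trans mn_le _.
  by rewrite ler_wpM2r ?divr_ge0 ?cap_ge0 // lerB // ge_min lexx.
have := success_prob_le_expR p0 q0 pq (G n) (A_ge0 n) (A_sum1 n) t_gt0 tM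
  (mul_ln_le_ln_card_weight_vectors R n (k n)) (mgf_le _ _ B_ge0 mB).
have := expRN_le_quarter c1 (le_trans b1 b_le).
have := expRN_le_quarter c2 (le_trans b2 b_le).
lra.
Unshelve. all: by end_near.
Qed.
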